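(* Under the standing assumptions, $\mathbf l_j=Q_{2,j}^*(a)\,\widehat H_{2,j}^{-1}\,Q_{2,j}(a)$ for $0\le j\le n-1$ and $\mathbf m_j=\Gamma_{1,j}^*(a)\,\widehat K_{1,j}^{-1}\,\Gamma_{1,j}(a)$ for $0\le j\le n$; moreover all $\mathbf l_j$ ($0\le j\le n-1$) and $\mathbf m_j$ ($0\le j\le n$) are positive definite matrices.
   Context: Let $q,n\in\mathbb N$ and let $a<b$ be real numbers. All matrices are complex; $I_q$, $0_q$ are the $q\times q$ identity and zero matrices. Let $s_0,\dots,s_{2n+1}$ be Hermitian $q\times q$ matrices and set $\widehat s_j:=-ab\,s_j+(a+b)s_{j+1}-s_{j+2}$. Define $H_{1,j}:=(s_{l+k})_{l,k=0}^j$, $H_{2,j}:=(\widehat s_{l+k})_{l,k=0}^{j}$, $K_{1,j}:=(bs_{l+k}-s_{l+k+1})_{l,k=0}^{j}$, $K_{2,j}:=(-as_{l+k}+s_{l+k+1})_{l,k=0}^j$. Standing assumption: $H_{1,n},H_{2,n-1},K_{1,n},K_{2,n}$ are positive definite. Let $T_0:=0_q$ and, for $j\ge1$, let $T_j$ be the $(j+1)\times(j+1)$ block matrix (blocks $q\times q$) with $I_q$ in block positions $(l+1,l)$, $l=0,\dots,j-1$, and $0_q$ elsewhere; $R_j(z):=(I_{(j+1)q}-zT_j)^{-1}$; $v_j:=\mathrm{col}(I_q,0_q,\dots,0_q)\in\mathbb C^{(j+1)q\times q}$. Let $u_{2,0}:=-(a+b)s_0+s_1$, $u_{2,j}:=\mathrm{col}(u_{2,0},-\widehat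 s_0,\dots,-\widehat s_{j-1})$; for $j\ge1$, $Y_{2,j}:=\mathrm{col}(\widehat s_j,\dots,\widehat s_{2j-1})$, $\widetilde Y_{1,j}:=\mathrm{col}(bs_j-s_{j+1},\dots,bs_{2j-1}-s_{2j})$. Schur complements: $\widehat H_{2,0}:=\widehat s_0$, $\widehat H_{2,j}:=\widehat s_{2j}-Y_{2,j}^*H_{2,j-1}^{-1}Y_{2,j}$; $\widehat K_{1,0}:=bs_0-s_1$, $\widehat K_{1,j}:=bs_{2j}-s_{2j+1}-\widetilde Y_{1,j}^*K_{1,j-1}^{-1}\widetilde Y_{1,j}$. Polynomials: $Q_{2,0}(z):=-(u_{2,0}+zs_0)$, $\Gamma_{1,0}:=I_q$; for $j\ge1$: $Q_{2,j}(z):=-(-Y_{2,j}^*H_{2,j-1}^{-1},I_q)R_j(z)(u_{2,j}+zv_js_0)$, $\Gamma_{1,j}(z):=(-\widetilde Y_{1,j}^*K_{1,j-1}^{-1},I_q)R_j(z)v_j$. Dyukarev–Stieltjes matrix (DSM) parameters: let $\lambda_j:=(u_{2,j}+av_js_0)^*R_j^*(a)H_{2,j}^{-1}R_j(a)(u_{2,j}+av_js_0)$ ($0\le j\le n-1$) and $\mu_j:=v_j^*R_j^*(a)K_{1,j}^{-1}R_j(a)v_j$ ($0\le j\le n$). Set $\mathbf l_{-1}:=s_0$, $\mathbf l_0:=\lambda_0$, $\mathbf l_j:=\lambda_j-\lambda_{j-1}$ ($1\le j\le n-1$), and $\mathbf m_0:=\mu_0=(bs_0-s_1)^{-1}$,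 $\mathbf m_j:=\mu_j-\mu_{j-1}$ ($1\le j\le n$). *)

(* Complex scalars: an arbitrary numClosedFieldType C
   (the field of complex numbers is the model). *)
From HB Require Import structures.
From mathcomp Require Import all_boot all_order all_algebra.
Set Implicit Arguments. Unset Strict Implicit. Unset Printing Implicit Defensive.
Import Order.TTheory GRing.Theory Num.Theory.
Local Open Scope ring_scope.

Section DSM.
Variable C : numClosedFieldType.

Definition ctrmx (m n : nat) (A : 'M[C]_(m, n)) : 'M[C]_(n, m) :=
  map_mx Num.conj (A^T).

Definition herm_mx (m : nat) (A : 'M[C]_m) : Prop := ctrmx A = A.

Definition posdef (m : nat) (A : 'M[C]_m) : Prop :=
  herm_mx A /\ forall x : 'cV[C]_m, x != 0 -> 0 < (ctrmx x *m A *m x) 0 0.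

Variable q : nat.

Notation bsz m := (\sum_(i < m) (fun _ : 'I_m => q) i)%N.

Definition bmx (m : nat) (B : nat -> nat -> 'M[C]_q) : 'M[C]_(bsz m) :=
  @mxblock C m m (fun _ => q) (fun _ => q) (fun l k => B (val l) (val k)).

Definition bcol (m : nat) (B : nat -> 'M[C]_q) : 'M[C]_(bsz m, q) :=
  @mxcol C m (fun _ => q) q (fun l => B (val l)).

Definition hankel (m : nat) (t : nat -> 'M[C]_q) : 'M[C]_(bsz m) :=
  bmx m (fun l k => t (l + k)%N).

Lemma bsz_recr (j : nat) : (bsz j + q)%N = bsz j.+1.
Proof. by rewrite big_ord_recr. Qed.

Definition brow_I (j : nat) (X : 'M[C]_(q, bsz j)) : 'M[C]_(q, bsz j.+1) :=
  castmx (erefl q, bsz_recr j) (row_mx X 1%:M).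

Definition Tmx (j : nat) : 'M[C]_(bsz j.+1) :=
  bmx j.+1 (fun l k => if l == k.+1 then 1%:M else 0).
Definition Rmx (j : nat) (z : C) : 'M[C]_(bsz j.+1) :=
  invmx (1%:M - z *: Tmx j).
Definition vmx (j : nat) : 'M[C]_(bsz j.+1, q) :=
  bcol j.+1 (fun l => if l == 0%N then 1%:M else 0).

Variables (a b : C) (s : nat -> 'M[C]_q).

Definition shat (j : nat) : 'M[C]_q :=
  - (a * b) *: s j + (a + b) *: s j.+1 - s j.+2.

Definition H1 (j : nat) := hankel j.+1 s.
Definition H2 (j : nat) := hankel j.+1 shat.
Definition K1 (j : nat) := hankel j.+1 (fun i => b *: s i - s i.+1).
Definition K2 (j : nat) := hankel j.+1 (fun i => - a *: s i + s i.+1).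

Definition u20 : 'M[C]_q := - (a + b) *: s 0%N + s 1%N.
Definition u2 (j : nat) : 'M[C]_(bsz j.+1, q) :=
  bcol j.+1 (fun l => if l == 0%N then u20 else - shat l.-1).

Definition Y2 (j : nat) : 'M[C]_(bsz j, q) := bcol j (fun l => shat (j + l)).
Definition Yt1 (j : nat) : 'M[C]_(bsz j, q) :=
  bcol j (fun l => b *: s (j + l)%N - s (j + l).+1).

Definition H2hat (j : nat) : 'M[C]_q :=
  match j with
  | 0 => shat 0
  | j'.+1 => shat (2 * j'.+1)%N - ctrmx (Y2 j'.+1) *m invmx (H2 j') *m Y2 j'.+1
  end.
Definition K1hat (j : nat) : 'M[C]_q :=
  match j with
  | 0 => b *: s 0%N - s 1%N
  | j'.+1 => b *: s (2 * j'.+1)%N - s (2 * j'.+1).+1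
             - ctrmx (Yt1 j'.+1) *m invmx (K1 j') *m Yt1 j'.+1
  end.

Definition Q2 (j : nat) (z : C) : 'M[C]_q :=
  match j with
  | 0 => - (u20 + z *: s 0%N)
  | j'.+1 => - (brow_I (- (ctrmx (Y2 j'.+1) *m invmx (H2 j'))) *m Rmx j'.+1 z
                 *m (u2 j'.+1 + z *: (vmx j'.+1 *m s 0%N)))
  end.
Definition Gamma1 (j : nat) (z : C) : 'M[C]_q :=
  match j with
  | 0 => 1%:M
  | j'.+1 => brow_I (- (ctrmx (Yt1 j'.+1) *m invmx (K1 j'))) *m Rmx j'.+1 z
             *m vmx j'.+1
  end.

Definition lambda (j : nat) : 'M[C]_q :=
  let w := u2 j + a *: (vmx j *m s 0%N) in
  ctrmx w *m ctrmx (Rmx j a) *m invmx (H2 j) *m Rmx j a *m w.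
Definition mu (j : nat) : 'M[C]_q :=
  ctrmx (vmx j) *m ctrmx (Rmx j a) *m invmx (K1 j) *m Rmx j a *m vmx j.

(* bold l_j for j >= 0 (l_{-1} := s_0 is not needed in the statement) *)
Definition lbold (j : nat) : 'M[C]_q :=
  match j with 0 => lambda 0 | j'.+1 => lambda j'.+1 - lambda j' end.
Definition mbold (j : nat) : 'M[C]_q :=
  match j with 0 => mu 0 | j'.+1 => mu j'.+1 - mu j' end.

End DSM.

(* Writing c_i := b s_i - s_{i+1}, one has shat_i = c_{i+1} - a c_i, and the
   resolvent R_j(a) turns u_{2,j} + a v_j s_0 into -col(c_0, ..., c_j) and v_j
   into col(I, a I, ..., a^j I).  Hence lambda_j = c^* H_{2,j}^{-1} c and
   mu_j = p^* K_{1,j}^{-1} p are quadratic forms of inverse block Hankel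
   matrices, and the Schur complement formula for the last block row splits
   such a form into the form of order j-1 plus (B c)^* S^{-1} (B c), where S is
   the Schur complement and B = (-Y^* H_{j-1}^{-1}, I).  Since Q_{2,j}(a) = B c
   and Gamma_{1,j}(a) = B p, this gives the formulas for l_j and m_j.  Positive
   definiteness follows once B c and B p are invertible: a vector annihilating
   them is, by the Hankel structure and shat_i = c_{i+1} - a c_i, annihilated
   by K_{1,j} (resp. H_{2,j-1}) and hence zero. *)
From Pilot Require Import Defs.
From HB Require Import structures.
From mathcomp Require Import all_boot all_order all_algebra.
From mathcomp Require Import zify ring.
Set Implicit Arguments. Unset Strict Implicit. Unset Printing Implicit Defensive.
Import Order.TTheory GRing.Theory Num.Theory.
Local Open Scope ring_scope.

Section ConjTranspose.
Variable C : numClosedFieldType.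

Lemma ctrmxK m n (A : 'M[C]_(m, n)) : ctrmx (ctrmx A) = A.
Proof. by apply/matrixP => i k; rewrite !mxE conjCK. Qed.

Lemma ctrmx_mul m n p (A : 'M[C]_(m, n)) (B : 'M[C]_(n, p)) :
  ctrmx (A *m B) = ctrmx B *m ctrmx A.
Proof. by rewrite /ctrmx trmx_mul map_mxM. Qed.

Lemma ctrmxD m n (A B : 'M[C]_(m, n)) : ctrmx (A + B) = ctrmx A + ctrmx B.
Proof. by apply/matrixP => i k; rewrite !mxE rmorphD. Qed.

Lemma ctrmxN m n (A : 'M[C]_(m, n)) : ctrmx (- A) = - ctrmx A.
Proof. by apply/matrixP => i k; rewrite !mxE rmorphN. Qed.

Lemma ctrmxB m n (A B : 'M[C]_(m, n)) : ctrmx (A - B) = ctrmx A - ctrmx B.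
Proof. by rewrite ctrmxD ctrmxN. Qed.

Lemma ctrmxZ m n (c : C) (A : 'M[C]_(m, n)) : ctrmx (c *: A) = c^* *: ctrmx A.
Proof. by apply/matrixP => i k; rewrite !mxE rmorphM. Qed.

Lemma ctrmx0 m n : ctrmx (0 : 'M[C]_(m, n)) = 0.
Proof. by apply/matrixP => i k; rewrite !mxE rmorph0. Qed.

Lemma ctrmx1 m : ctrmx (1%:M : 'M[C]_m) = 1%:M.
Proof.
by apply/matrixP => i k; rewrite !mxE eq_sym; case: (_ == _); rewrite ?rmorph1 ?rmorph0.
Qed.

Lemma ctrmx_inv m (A : 'M[C]_m) : ctrmx (invmx A) = invmx (ctrmx A).
Proof. by rewrite /ctrmx trmx_inv map_invmx. Qed.

End ConjTranspose.

Section PositiveDefinite.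
Variable C : numClosedFieldType.

Lemma unitmx_ker n (A : 'M[C]_n) :
  (forall x : 'cV[C]_n, A *m x = 0 -> x = 0) -> A \in unitmx.
Proof.
move=> H; rewrite unitmxE unitfE -det_tr; apply/negP => /det0P [v nv0 vA].
have := H v^T; rewrite -(trmxK A) -trmx_mul vA trmx0 => /(_ erefl) /eqP.
by rewrite -trmx0 (inj_eq trmx_inj) (negbTE nv0).
Qed.

Lemma unitmx_lker n (A : 'M[C]_n) :
  (forall x : 'rV[C]_n, x *m A = 0 -> x = 0) -> A \in unitmx.
Proof.
move=> H; rewrite unitmxE unitfE; apply/negP => /det0P [v nv0 vA].
by move: nv0; rewrite (H v vA) eqxx.
Qed.

Lemma posdef_herm n (A : 'M[C]_n) : posdef A -> ctrmx A = A.
Proof. by case. Qed.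

Lemma posdef_ker n (A : 'M[C]_n) (x : 'cV[C]_n) : posdef A -> A *m x = 0 -> x = 0.
Proof.
move=> [_ H] Ax; apply/eqP; apply/negPn/negP => /H.
by rewrite -mulmxA Ax mulmx0 mxE ltxx.
Qed.

Lemma posdef_lker n (A : 'M[C]_n) (x : 'rV[C]_n) : posdef A -> x *m A = 0 -> x = 0.
Proof.
move=> P xA; have := @posdef_ker n A (ctrmx x) P.
rewrite -{1}(posdef_herm P) -ctrmx_mul xA ctrmx0 => /(_ erefl) /(congr1 (@ctrmx C _ _)).
by rewrite ctrmxK ctrmx0.
Qed.

Lemma posdef_unit n (A : 'M[C]_n) : posdef A -> A \in unitmx.
Proof. by move=> P; apply: unitmx_ker => x; apply: posdef_ker. Qed.

Lemma posdef_inv n (A : 'M[C]_n) : posdef A -> posdef (invmx A).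
Proof.
move=> P; have U := posdef_unit P; split.
  by rewrite /herm_mx ctrmx_inv (posdef_herm P).
move=> x nx; set y := invmx A *m x.
have ny : y != 0.
  by apply: contraNneq nx => y0; rewrite -[x](mulKVmx U) -/y y0 mulmx0.
have := (proj2 P) y ny.
rewrite /y ctrmx_mul ctrmx_inv (posdef_herm P) -!mulmxA (mulKVmx U).
by rewrite !mulmxA.
Qed.

Lemma posdef_congr n (A B : 'M[C]_n) :
  posdef A -> B \in unitmx -> posdef (ctrmx B *m A *m B).
Proof.
move=> P U; split.
  by rewrite /herm_mx !ctrmx_mul ctrmxK (posdef_herm P) mulmxA.
move=> x nx; have nBx : B *m x != 0.
  by apply: contraNneq nx => Bx0; rewrite -(mulKmx U x) Bx0 mulmx0.
by have := (proj2 P) _ nBx; rewrite ctrmx_mul !mulmxA.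
Qed.

End PositiveDefinite.

Section BlockColumns.
Variables (C : numClosedFieldType) (q : nat).
Notation bsz m := (\sum_(i < m) (fun _ : 'I_m => q) i)%N.

Lemma bszE m : bsz m = (m * q)%N.
Proof. by rewrite sum_nat_const card_ord. Qed.

Definition colblk m p (g : nat -> 'M[C]_(q, p)) : 'M[C]_(bsz m, p) :=
  @mxcol C m (fun _ => q) p (fun l => g (val l)).
Definition rowblk m p (g : nat -> 'M[C]_(p, q)) : 'M[C]_(p, bsz m) :=
  @mxrow C m (fun _ => q) p (fun l => g (val l)).

Definition colblk_nth m p (V : 'M[C]_(bsz m, p)) (l : nat) : 'M[C]_(q, p) :=
  if (insub l : option 'I_m) is Some i then submxcol V i else 0.

Definition delta_colblk m (i : nat) : 'M[C]_(bsz m, q) :=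
  colblk m (fun l => if l == i then 1%:M else 0).

Lemma bcolE m (g : nat -> 'M[C]_q) : bcol m g = colblk m g.
Proof. by []. Qed.

Lemma colblk_mul m p p' (g : nat -> 'M[C]_(q, p)) (A : 'M[C]_(p, p')) :
  colblk m g *m A = colblk m (fun l => g l *m A).
Proof. by rewrite /colblk mxcol_mul. Qed.

Lemma colblkD m p (f g : nat -> 'M[C]_(q, p)) :
  colblk m f + colblk m g = colblk m (fun l => f l + g l).
Proof. by rewrite /colblk mxcolD. Qed.

Lemma colblkN m p (f : nat -> 'M[C]_(q, p)) : - colblk m f = colblk m (fun l => - f l).
Proof. by rewrite /colblk mxcolN. Qed.

Lemma colblkZ m p (c : C) (f : nat -> 'M[C]_(q, p)) :
  c *: colblk m f = colblk m (fun l => c *: f l).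
Proof. by apply/matrixP => i k; rewrite !mxE. Qed.

Lemma colblk0 m p : colblk m (fun _ => 0 : 'M[C]_(q, p)) = 0.
Proof. by rewrite /colblk mxcol0. Qed.

Lemma rowblk0 m p : rowblk m (fun _ => 0 : 'M[C]_(p, q)) = 0.
Proof. by rewrite /rowblk mxrow0. Qed.

Lemma eq_colblk m p (f g : nat -> 'M[C]_(q, p)) :
  (forall l, (l < m)%N -> f l = g l) -> colblk m f = colblk m g.
Proof. by move=> H; apply: eq_mxcol => i; apply: H (ltn_ord i). Qed.

Lemma colblk_inj m p (f g : nat -> 'M[C]_(q, p)) :
  colblk m f = colblk m g -> forall l, (l < m)%N -> f l = g l.
Proof.
move=> H l lm.
by have := congr1 (fun V => submxcol V (Ordinal lm)) H; rewrite !mxcolK.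
Qed.

Lemma colblk_nthK m p (V : 'M[C]_(bsz m, p)) : colblk m (colblk_nth V) = V.
Proof. by rewrite -[RHS]submxcolK; apply: eq_mxcol => i; rewrite /colblk_nth valK. Qed.

Lemma colblk_nthE m p (f : nat -> 'M[C]_(q, p)) l :
  (l < m)%N -> colblk_nth (colblk m f) l = f l.
Proof. by move=> lm; rewrite /colblk_nth insubT /colblk mxcolK. Qed.

Lemma Rank_val m (i : 'I_m) (r : 'I_q) :
  (@tagnat.Rank m (fun _ => q) i r : nat) = (i * q + r)%N.
Proof.
rewrite tagnat.RankEsum -(big_ord_widen _ (fun _ => q) (ltnW (ltn_ord i))).
by rewrite sum_nat_const card_ord.
Qed.

Lemma colblk_entry m p (g : nat -> 'M[C]_(q, p)) (i : 'I_m) (r : 'I_q) k :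
  colblk m g (tagnat.Rank i r) k = g i r k.
Proof. by have := mxcolK (fun l : 'I_m => g (val l)) i => /matrixP/(_ r k); rewrite !mxE. Qed.

Lemma colblk_recr m p (g : nat -> 'M[C]_(q, p)) :
  colblk m.+1 g = castmx (bsz_recr q m, erefl) (col_mx (colblk m g) (g m)).
Proof.
apply/matrixP => x k; rewrite -[x]tagnat.sig2K.
move: (tagnat.sig1 x) (tagnat.sig2 x) => i r.
rewrite colblk_entry castmxE mxE cast_ord_id.
have Hz : (cast_ord (esym (bsz_recr q m)) (tagnat.Rank i r) : nat) = (i * q + r)%N
  := Rank_val i r.
have lr := ltn_ord r; have li := ltn_ord i.
case: splitP => y; rewrite Hz => Hy.
  have ly : (y < m * q)%N by rewrite -bszE.
  have ltim : (i < m)%N by rewrite -(ltn_pmul2r (leq_ltn_trans (leq0n _) lr)); lia.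
  have -> : y = tagnat.Rank (Ordinal ltim) r by apply: val_inj; rewrite [RHS]Rank_val.
  by rewrite colblk_entry.
move: Hy; rewrite bszE => Hy.
have ly := ltn_ord y.
have eim : (i : nat) = m.
  apply/eqP; rewrite eqn_leq -ltnS li andTb leqNgt; apply/negP => him.
  have : (i * q + r < m * q)%N.
    apply: (@leq_trans (i * q + q)); first by rewrite ltn_add2l.
    by rewrite addnC -mulSn leq_mul2r him orbT.
  by rewrite Hy; lia.
have -> : r = y by apply: val_inj; move/eqP: Hy; rewrite eim eqn_add2l => /eqP.
by rewrite eim.
Qed.

Lemma castmx_mul_cancel n1 n2 p1 p2 (e : n1 = n2) (A : 'M[C]_(p1, n1))
    (B : 'M[C]_(n1, p2)) :
  castmx (erefl, e) A *m castmx (e, erefl) B = A *m B.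
Proof. by case: n2 / e; rewrite !castmx_id. Qed.

Lemma brow_I_mul j p (X : 'M[C]_(q, bsz j)) (g : nat -> 'M[C]_(q, p)) :
  brow_I X *m colblk j.+1 g = X *m colblk j g + g j.
Proof. by rewrite /brow_I colblk_recr castmx_mul_cancel mul_row_col mul1mx. Qed.

Lemma bmx_mul_colblk m p (B : nat -> nat -> 'M[C]_q) (g : nat -> 'M[C]_(q, p)) :
  bmx m B *m colblk m g = colblk m (fun l => \sum_(k < m) B l k *m g k).
Proof. by rewrite /bmx /colblk mul_mxblock_mxrow. Qed.

Lemma rowblk_mul_colblk m p p' (f : nat -> 'M[C]_(p, q)) (g : nat -> 'M[C]_(q, p')) :
  rowblk m f *m colblk m g = \sum_(l < m) f l *m g l.
Proof. by rewrite /rowblk /colblk mul_mxrow_mxcol. Qed.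

Lemma rowblk_mul_bmx m p (f : nat -> 'M[C]_(p, q)) (B : nat -> nat -> 'M[C]_q) :
  rowblk m f *m bmx m B = rowblk m (fun k => \sum_(l < m) f l *m B l k).
Proof. by rewrite /rowblk /bmx mul_mxrow_mxblock. Qed.

Lemma ctrmx_colblk m p (g : nat -> 'M[C]_(q, p)) :
  ctrmx (colblk m g) = rowblk m (fun l => ctrmx (g l)).
Proof. by apply/matrixP => i k; rewrite !mxE. Qed.

Lemma ctrmx_rowblk m p (g : nat -> 'M[C]_(p, q)) :
  ctrmx (rowblk m g) = colblk m (fun l => ctrmx (g l)).
Proof. by apply/matrixP => i k; rewrite !mxE. Qed.

Lemma ctrmx_colblk_mul m p p' (f : nat -> 'M[C]_(q, p)) (g : nat -> 'M[C]_(q, p')) :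
  ctrmx (colblk m f) *m colblk m g = \sum_(l < m) ctrmx (f l) *m g l.
Proof. by rewrite ctrmx_colblk rowblk_mul_colblk. Qed.

Lemma rowblk_nthK m p (V : 'M[C]_(p, bsz m)) :
  rowblk m (fun l => ctrmx (colblk_nth (ctrmx V) l)) = V.
Proof. by rewrite -ctrmx_colblk colblk_nthK ctrmxK. Qed.

Lemma rowblk_inj m p (f g : nat -> 'M[C]_(p, q)) :
  rowblk m f = rowblk m g -> forall l, (l < m)%N -> f l = g l.
Proof.
move=> H l lm; rewrite -(ctrmxK (f l)) -(ctrmxK (g l)); congr ctrmx.
apply: (@colblk_inj m p (fun l => ctrmx (f l)) (fun l => ctrmx (g l))) => //.
by rewrite -!ctrmx_rowblk H.
Qed.

Lemma mul_bsz0 p p' (A : 'M[C]_(p, bsz 0)) (B : 'M[C]_(bsz 0, p')) : A *m B = 0.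
Proof.
apply/matrixP => i k; rewrite !mxE big1 // => -[x hx] _.
by exfalso; move: hx; rewrite bszE.
Qed.

Lemma sum_pick m p p' (F : nat -> 'M[C]_(p, p')) i : (i < m)%N ->
  \sum_(k < m) (if (k : nat) == i then F k else 0) = F i.
Proof.
move=> im; rewrite (bigD1 (Ordinal im)) //= eqxx big1 ?addr0 // => k nk.
by case: eqP => // ek; move/eqP: nk; case; apply: val_inj.
Qed.

Lemma ctrmx_delta_colblk_mul m p (f : nat -> 'M[C]_(q, p)) i : (i < m)%N ->
  ctrmx (delta_colblk m i) *m colblk m f = f i.
Proof.
move=> im; rewrite /delta_colblk ctrmx_colblk_mul -(sum_pick f im).
by apply: eq_bigr => k _; case: eqP => _; rewrite ?ctrmx1 ?ctrmx0 ?mul1mx ?mul0mx.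
Qed.

Lemma rowblk_mul_delta m p (f : nat -> 'M[C]_(p, q)) i : (i < m)%N ->
  rowblk m f *m delta_colblk m i = f i.
Proof.
move=> im; rewrite /delta_colblk rowblk_mul_colblk -(sum_pick f im).
by apply: eq_bigr => k _; case: eqP => _; rewrite ?mulmx1 ?mulmx0.
Qed.

Lemma bmx_mul_delta m (B : nat -> nat -> 'M[C]_q) i : (i < m)%N ->
  bmx m B *m delta_colblk m i = colblk m (fun l => B l i).
Proof.
move=> im; rewrite /delta_colblk bmx_mul_colblk; apply: eq_colblk => l _.
rewrite -(sum_pick (B l) im); apply: eq_bigr => k _.
by case: eqP => _; rewrite ?mulmx1 ?mulmx0.
Qed.

End BlockColumns.

Section ZeroPadding.
Variables (C : numClosedFieldType) (q j : nat).
Notation bsz m := (\sum_(i < m) (fun _ : 'I_m => q) i)%N.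
Notation ej := (@delta_colblk C q j.+1 j).

Definition pad0 p (V : 'M[C]_(bsz j, p)) : 'M[C]_(bsz j.+1, p) :=
  colblk j.+1 (fun l => if (l < j)%N then colblk_nth V l else 0).

Lemma colblk_pad0_delta p (V : 'M[C]_(bsz j, p)) (x : 'M[C]_(q, p)) :
  colblk j.+1 (fun l => if (l < j)%N then colblk_nth V l else if l == j then x else 0)
  = pad0 V + ej *m x.
Proof.
rewrite /pad0 /delta_colblk colblk_mul colblkD; apply: eq_colblk => l hl.
case: ltnP => lj; first by rewrite (ltn_eqF lj) mul0mx addr0.
have -> : l = j by apply/eqP; rewrite eqn_leq lj -ltnS hl.
by rewrite eqxx mul1mx add0r.
Qed.

Lemma ctrmx_colblk_mul_pad0 p p' (w : nat -> 'M[C]_(q, p')) (V : 'M[C]_(bsz j, p)) :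
  ctrmx (colblk j.+1 w) *m pad0 V = ctrmx (colblk j w) *m V.
Proof.
rewrite /pad0 ctrmx_colblk_mul big_ord_recr /= ltnn mulmx0 addr0.
by rewrite -{2}(colblk_nthK V) ctrmx_colblk_mul; apply: eq_bigr => k _; rewrite ltn_ord.
Qed.

Lemma ctrmx_colblk_mul_delta p (w : nat -> 'M[C]_(q, p)) :
  ctrmx (colblk j.+1 w) *m ej = ctrmx (w j).
Proof. by rewrite -[LHS]ctrmxK ctrmx_mul ctrmxK ctrmx_delta_colblk_mul. Qed.

Lemma pad0_mul p p' (V : 'M[C]_(bsz j, p)) (A : 'M[C]_(p, p')) :
  pad0 V *m A = pad0 (V *m A).
Proof.
rewrite /pad0 colblk_mul; apply: eq_colblk => l hl.
case: ifP => lj; last by rewrite mul0mx.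
by rewrite -{2}(colblk_nthK V) colblk_mul colblk_nthE.
Qed.

Lemma pad0_eq0 p (V : 'M[C]_(bsz j, p)) : pad0 V = 0 -> V = 0.
Proof.
rewrite /pad0 -(colblk0 C q j.+1 p) => /colblk_inj V0.
rewrite -(colblk_nthK V) -(colblk0 C q j p); apply: eq_colblk => l lj.
by have := V0 l (ltnW lj); rewrite lj.
Qed.

Lemma ctrmx_pad0_mul_pad0 p p' (V : 'M[C]_(bsz j, p)) (U : 'M[C]_(bsz j, p')) :
  ctrmx (pad0 V) *m pad0 U = ctrmx V *m U.
Proof.
rewrite /pad0 ctrmx_colblk_mul_pad0; congr (ctrmx _ *m _).
by rewrite -[RHS]colblk_nthK; apply: eq_colblk => l ->.
Qed.

Lemma ctrmx_pad0_mul_delta p (V : 'M[C]_(bsz j, p)) : ctrmx (pad0 V) *m ej = 0.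
Proof. by rewrite /pad0 ctrmx_colblk_mul_delta ltnn ctrmx0. Qed.

Lemma ctrmx_delta_mul_pad0 p (V : 'M[C]_(bsz j, p)) : ctrmx ej *m pad0 V = 0.
Proof. by rewrite -[LHS]ctrmxK ctrmx_mul ctrmxK ctrmx_pad0_mul_delta ctrmx0. Qed.

Lemma ctrmx_delta_mul_delta : ctrmx ej *m ej = 1%:M.
Proof. by rewrite {2}/delta_colblk ctrmx_delta_colblk_mul // eqxx. Qed.

Lemma pad0_delta k : (k < j)%N -> pad0 (@delta_colblk C q j k) = @delta_colblk C q j.+1 k.
Proof.
move=> kj; rewrite /pad0 /delta_colblk; apply: eq_colblk => l hl.
case: ltnP => lj; first by rewrite colblk_nthE.
by case: eqP => // elk; move: lj; rewrite elk leqNgt kj.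
Qed.

Lemma brow_I_mul_pad0 p (X : 'M[C]_(q, bsz j)) (V : 'M[C]_(bsz j, p)) :
  brow_I X *m pad0 V = X *m V.
Proof.
rewrite /pad0 brow_I_mul ltnn addr0; congr (_ *m _).
by rewrite -[RHS]colblk_nthK; apply: eq_colblk => l ->.
Qed.

Lemma brow_I_mul_delta (X : 'M[C]_(q, bsz j)) : brow_I X *m ej = 1%:M.
Proof.
rewrite /delta_colblk brow_I_mul eqxx.
rewrite (@eq_colblk C q j q _ (fun _ => 0)) ?colblk0 ?mulmx0 ?add0r // => l lj.
by rewrite (ltn_eqF lj).
Qed.

End ZeroPadding.

Section HankelHermitian.
Variables (C : numClosedFieldType) (q : nat) (t : nat -> 'M[C]_q).

Lemma hankel_herm m : (forall i, (i <= 2 * m)%N -> herm_mx (t i)) ->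
  herm_mx (hankel m t).
Proof.
move=> H; apply/matrixP => x y; rewrite !mxE.
rewrite -[in RHS](H (tagnat.sig1 x + tagnat.sig1 y)%N); first by rewrite !mxE addnC.
by rewrite mul2n -addnn leq_add // ltnW.
Qed.

End HankelHermitian.

(* Block decomposition of H := hankel (j+1) t as
   [[H', Y], [Y^*, t_{2j}]] with H' := hankel j t. *)
Section HankelSchur.
Variables (C : numClosedFieldType) (q : nat) (t : nat -> 'M[C]_q) (j : nat).
Notation bsz m := (\sum_(i < m) (fun _ : 'I_m => q) i)%N.
Notation ej := (@delta_colblk C q j.+1 j).
Hypothesis t_herm : forall i, (i <= 2 * j)%N -> herm_mx (t i).

Let H' := hankel j t.
Let H := hankel j.+1 t.
Let Y : 'M[C]_(bsz j, q) := colblk j (fun l => t (j + l)).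

Definition schur_row := brow_I (- (ctrmx Y *m invmx H')).
Definition schur_compl := t (2 * j) - ctrmx Y *m invmx H' *m Y.

Lemma hankel_mul_pad0 p (V : 'M[C]_(bsz j, p)) :
  H *m pad0 V = pad0 (H' *m V) + ej *m (ctrmx Y *m V).
Proof.
rewrite /H /hankel bmx_mul_colblk -colblk_pad0_delta; apply: eq_colblk => l hl.
rewrite big_ord_recr /= ltnn mulmx0 addr0.
rewrite -{2 3}(colblk_nthK V) /H' /hankel bmx_mul_colblk /Y ctrmx_colblk_mul.
case: ltnP => lj.
  by rewrite colblk_nthE //; apply: eq_bigr => k _; rewrite ltn_ord.
have -> : l = j by apply/eqP; rewrite eqn_leq lj -ltnS hl.
rewrite eqxx; apply: eq_bigr => k _.
by rewrite ltn_ord t_herm // mul2n -addnn leq_add2l ltnW.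
Qed.

Lemma hankel_mul_delta : H *m ej = pad0 Y + ej *m t (2 * j).
Proof.
rewrite /H /hankel bmx_mul_delta // -colblk_pad0_delta; apply: eq_colblk => l hl.
case: ltnP => lj; first by rewrite /Y colblk_nthE // addnC.
have -> : l = j by apply/eqP; rewrite eqn_leq lj -ltnS hl.
by rewrite eqxx mul2n -addnn.
Qed.

Hypothesis H_posdef : posdef H.

Lemma hankel_posdef_pred : posdef H'.
Proof.
split; first exact: hankel_herm (fun i hi => t_herm hi).
move=> x nx; have nv : pad0 x != 0 by apply: contraNneq nx => /(@pad0_eq0 C q j) ->.
have := (proj2 H_posdef) _ nv.
rewrite -mulmxA hankel_mul_pad0 mulmxDr mulmxA ctrmx_pad0_mul_pad0.
by rewrite ctrmx_pad0_mul_delta mul0mx addr0 mulmxA.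
Qed.

Let H'_unit : H' \in unitmx := posdef_unit hankel_posdef_pred.

(* Equivalently, [invmx H *m ej = (ej - pad0 (invmx H' *m Y)) *m invmx schur_compl]. *)
Lemma hankel_mul_schur p (x : 'M[C]_(q, p)) :
  H *m (ej *m x - pad0 (invmx H' *m Y *m x)) = ej *m (schur_compl *m x).
Proof.
have e1 : H' *m (invmx H' *m Y *m x) = Y *m x by rewrite mulmxA (mulKVmx H'_unit).
rewrite mulmxBr [H *m (_ *m x)]mulmxA hankel_mul_delta hankel_mul_pad0 e1.
rewrite mulmxDl pad0_mul opprD addrACA subrr add0r -mulmxA -mulmxBr.
by rewrite /schur_compl mulmxBl !mulmxA.
Qed.

Lemma schur_compl_posdef : posdef schur_compl.
Proof.
have H'_herm : herm_mx H' := posdef_herm hankel_posdef_pred.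
split.
  rewrite /herm_mx /schur_compl ctrmxB t_herm // !ctrmx_mul ctrmx_inv H'_herm ctrmxK.
  by rewrite mulmxA.
move=> x nx; set v := ej *m x - pad0 (invmx H' *m Y *m x).
have ev : ctrmx ej *m v = x.
  by rewrite /v mulmxBr mulmxA ctrmx_delta_mul_delta mul1mx ctrmx_delta_mul_pad0 subr0.
have nv : v != 0 by apply: contraNneq nx => v0; rewrite -ev v0 mulmx0.
have := (proj2 H_posdef) _ nv; rewrite -mulmxA hankel_mul_schur mulmxA.
suff -> : ctrmx v *m ej = ctrmx x by rewrite mulmxA.
by rewrite -[LHS]ctrmxK ctrmx_mul ctrmxK ev.
Qed.

Lemma schur_row_mul_hankel_col k : (k < j)%N ->
  schur_row *m colblk j.+1 (fun l => t (l + k)) = 0.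
Proof.
move=> kj.
have -> : colblk j.+1 (fun l => t (l + k)) = H *m @delta_colblk C q j.+1 k.
  by rewrite /H /hankel bmx_mul_delta // ltnW.
rewrite -pad0_delta // hankel_mul_pad0 mulmxDr mulmxA /schur_row.
rewrite brow_I_mul_delta mul1mx brow_I_mul_pad0 mulNmx -!mulmxA (mulKmx H'_unit).
exact: addNr.
Qed.

Lemma hankel_inv_form p (w : nat -> 'M[C]_(q, p)) :
  ctrmx (colblk j.+1 w) *m invmx H *m colblk j.+1 w =
  ctrmx (colblk j w) *m invmx H' *m colblk j w +
  ctrmx (schur_row *m colblk j.+1 w) *m invmx schur_compl *m (schur_row *m colblk j.+1 w).
Proof.
have S_unit := posdef_unit schur_compl_posdef.
set U := invmx H' *m colblk j w.
have Bw : schur_row *m colblk j.+1 w = w j - ctrmx Y *m U.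
  by rewrite /schur_row brow_I_mul mulNmx addrC /U mulmxA.
set y := invmx schur_compl *m (schur_row *m colblk j.+1 w).
set G := pad0 U + (ej *m y - pad0 (invmx H' *m Y *m y)).
have HG : H *m G = colblk j.+1 w.
  rewrite /G mulmxDr hankel_mul_schur hankel_mul_pad0 /U (mulKVmx H'_unit).
  rewrite /y (mulKVmx S_unit) -addrA -mulmxDr Bw addrCA subrr addr0.
  rewrite -colblk_pad0_delta; apply: eq_colblk => l hl.
  case: ltnP => lj; first by rewrite colblk_nthE.
  have -> : l = j by apply/eqP; rewrite eqn_leq lj -ltnS hl.
  by rewrite eqxx.
rewrite -[LHS]mulmxA.
have -> : invmx H *m colblk j.+1 w = G by rewrite -HG mulKmx ?posdef_unit.
rewrite /G !mulmxDr mulmxN ctrmx_colblk_mul_pad0 mulmxA ctrmx_colblk_mul_delta.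
rewrite ctrmx_colblk_mul_pad0 -[ctrmx _ *m invmx H' *m _]mulmxA -/U.
rewrite -[ctrmx (schur_row *m _) *m _ *m _]mulmxA -/y [in ctrmx (schur_row *m _)]Bw.
by rewrite ctrmxB ctrmx_mul /U ctrmx_mul ctrmx_inv (posdef_herm hankel_posdef_pred)
  ctrmxK mulmxBl !mulmxA.
Qed.

End HankelSchur.

Lemma hankel_posdef_le (C : numClosedFieldType) (q : nat) (t : nat -> 'M[C]_q) n :
  (forall i, (i.+2 <= 2 * n)%N -> herm_mx (t i)) -> posdef (hankel n t) ->
  forall j, (j <= n)%N -> posdef (hankel j t).
Proof.
move=> ht P j jn; rewrite -(subKn jn).
elim: (n - j)%N (leq_subr j n) => [|d IH] dn; first by rewrite subn0.
have dn' : (n - d.+1).+1 = (n - d)%N by rewrite -subSn // subSS.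
apply: (@hankel_posdef_pred C q t (n - d.+1)); last by rewrite dn'; apply: IH; lia.
by move=> i hi; apply: ht; lia.
Qed.

Section Resolvent.
Variables (C : numClosedFieldType) (q : nat).
Notation bsz m := (\sum_(i < m) (fun _ : 'I_m => q) i)%N.

Lemma Tmx_mul j p (g : nat -> 'M[C]_(q, p)) :
  Tmx C q j *m colblk j.+1 g = colblk j.+1 (fun l => if l is l'.+1 then g l' else 0).
Proof.
rewrite /Tmx bmx_mul_colblk; apply: eq_colblk => -[|l] hl.
  by rewrite big1 // => k _; rewrite mul0mx.
rewrite -(sum_pick g (ltnW hl)).
by apply: eq_bigr => k _; rewrite eqSS eq_sym; case: eqP; rewrite ?mul1mx ?mul0mx.
Qed.

Lemma shift_mul j p (z : C) (g : nat -> 'M[C]_(q, p)) :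
  (1%:M - z *: Tmx C q j) *m colblk j.+1 g =
  colblk j.+1 (fun l => g l - z *: (if l is l'.+1 then g l' else 0)).
Proof. by rewrite mulmxBl mul1mx -scalemxAl Tmx_mul colblkZ colblkN colblkD. Qed.

Lemma shift_unit j (z : C) : (1%:M - z *: Tmx C q j) \in unitmx.
Proof.
apply: unitmx_ker => x; rewrite -(colblk_nthK x) shift_mul => H.
have H0 := colblk_inj (etrans H (esym (colblk0 C q j.+1 1))).
rewrite -(colblk0 C q j.+1 1); apply: eq_colblk.
elim=> [|l IH] hl; first by have := H0 0%N hl; rewrite scaler0 subr0.
by have := H0 l.+1 hl; rewrite IH ?scaler0 ?subr0 // ltnW.
Qed.

Lemma Rmx_solve j (z : C) p (V W : 'M[C]_(bsz j.+1, p)) :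
  (1%:M - z *: Tmx C q j) *m V = W -> Rmx q j z *m W = V.
Proof. by move=> <-; rewrite /Rmx mulKmx // shift_unit. Qed.

End Resolvent.

Section TailSums.
Variables (C : numClosedFieldType) (a : C) (j p q p' : nat) (x : nat -> 'M[C]_(p, q)).

Definition tail_sum m := \sum_(m <= l < j.+1) a ^+ (l - m) *: x l.

Lemma tail_sumS m : (m < j.+1)%N -> tail_sum m = x m + a *: tail_sum m.+1.
Proof.
move=> mj; rewrite /tail_sum big_ltn // subnn expr0 scale1r; congr (_ + _).
rewrite scaler_sumr; apply: eq_big_nat => l /andP [ml _].
by rewrite scalerA -exprS subnSK.
Qed.

Lemma tail_sum_end : tail_sum j.+1 = 0.
Proof. by rewrite /tail_sum big_geq. Qed.

Lemma sum_by_parts (c : nat -> 'M[C]_(q, p')) :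
  \sum_(l < j.+1) x l *m c l =
  tail_sum 0 *m c 0%N + \sum_(m < j) tail_sum m.+1 *m (c m.+1 - a *: c m).
Proof.
rewrite -(big_mkord xpredT (fun l => x l *m c l)).
rewrite -(big_mkord xpredT (fun m => tail_sum m.+1 *m (c m.+1 - a *: c m))).
transitivity (\sum_(0 <= l < j.+1) (tail_sum l *m c l - (a *: tail_sum l.+1) *m c l)).
  by apply: eq_big_nat => l /andP [_ lj]; rewrite tail_sumS // mulmxDl addrK.
rewrite big_split /= sumrN big_nat_recl // big_nat_recr //= tail_sum_end.
rewrite scaler0 mul0mx addr0 -addrA -sumrB; congr (_ + _).
by apply: eq_big_nat => m _; rewrite mulmxBr -scalemxAr scalemxAl.
Qed.

End TailSums.

Section DSMParameters.
Variables (C : numClosedFieldType) (q : nat) (a b : C) (s : nat -> 'M[C]_q).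
Notation bsz m := (\sum_(i < m) (fun _ : 'I_m => q) i)%N.
Notation shat := (shat a b s).

(* K_{1,j} is the Hankel matrix of this sequence. *)
Definition kseq (i : nat) : 'M[C]_q := b *: s i - s i.+1.
Definition apow (l : nat) : 'M[C]_q := a ^+ l *: 1%:M.

Lemma shat_kseq i : shat i = kseq i.+1 - a *: kseq i.
Proof. by apply/matrixP => x y; rewrite /Defs.shat /kseq !mxE; ring. Qed.

Lemma Rmx_u2 j :
  Rmx q j a *m (u2 a b s j + a *: (vmx C q j *m s 0%N)) = - colblk j.+1 kseq.
Proof.
apply: Rmx_solve; rewrite mulmxN shift_mul /u2 /vmx !bcolE colblk_mul colblkZ.
rewrite colblkD colblkN; apply: eq_colblk => -[|l] _ /=.
  by rewrite mul1mx; apply/matrixP => x y; rewrite /u20 /kseq !mxE; ring.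
by rewrite mul0mx shat_kseq; apply/matrixP => x y; rewrite !mxE; ring.
Qed.

Lemma Rmx_vmx j : Rmx q j a *m vmx C q j = colblk j.+1 apow.
Proof.
apply: Rmx_solve; rewrite shift_mul /vmx bcolE; apply: eq_colblk => -[|l] _.
  by rewrite /apow expr0 scale1r scaler0 subr0.
by rewrite /apow scalerA -exprS subrr.
Qed.

Lemma lambdaE j :
  lambda a b s j = ctrmx (colblk j.+1 kseq) *m invmx (hankel j.+1 shat) *m colblk j.+1 kseq.
Proof.
rewrite /lambda -ctrmx_mul -[_ *m Rmx _ _ _ *m _]mulmxA Rmx_u2.
by rewrite ctrmxN !mulNmx mulmxN opprK.
Qed.

Lemma muE j :
  mu a b s j = ctrmx (colblk j.+1 apow) *m invmx (hankel j.+1 kseq) *m colblk j.+1 apow.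
Proof. by rewrite /mu -ctrmx_mul -[_ *m Rmx _ _ _ *m _]mulmxA Rmx_vmx. Qed.

Lemma Q2E j : Q2 a b s j a = schur_row shat j *m colblk j.+1 kseq.
Proof.
case: j => [|j]; last by rewrite /Q2 -mulmxA Rmx_u2 mulmxN opprK.
rewrite /schur_row brow_I_mul mul_bsz0 add0r.
by apply/matrixP => x y; rewrite /Q2 /u20 /kseq !mxE; ring.
Qed.

Lemma Gamma1E j : Gamma1 b s j a = schur_row kseq j *m colblk j.+1 apow.
Proof.
case: j => [|j]; last by rewrite /Gamma1 -mulmxA Rmx_vmx.
by rewrite /schur_row brow_I_mul mul_bsz0 add0r /apow expr0 scale1r.
Qed.

Lemma H2hatE j : H2hat a b s j = schur_compl shat j.
Proof. by case: j => [|j] //; rewrite /schur_compl mul_bsz0 subr0. Qed.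

Lemma K1hatE j : K1hat b s j = schur_compl kseq j.
Proof. by case: j => [|j] //; rewrite /schur_compl mul_bsz0 subr0. Qed.

Lemma lboldE j : (forall i, (i <= 2 * j)%N -> herm_mx (shat i)) ->
  posdef (hankel j.+1 shat) ->
  lbold a b s j = ctrmx (Q2 a b s j a) *m invmx (H2hat a b s j) *m Q2 a b s j a.
Proof.
move=> ht P; rewrite Q2E H2hatE.
case: j ht P => [|j] ht P; rewrite /lbold ?lambdaE (hankel_inv_form ht P).
  by rewrite mul_bsz0 add0r.
by rewrite addrC addKr.
Qed.

Lemma mboldE j : (forall i, (i <= 2 * j)%N -> herm_mx (kseq i)) ->
  posdef (hankel j.+1 kseq) ->
  mbold a b s j = ctrmx (Gamma1 b s j a) *m invmx (K1hat b s j) *m Gamma1 b s j a.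
Proof.
move=> ht P; rewrite Gamma1E K1hatE.
case: j ht P => [|j] ht P; rewrite /mbold ?muE (hankel_inv_form ht P).
  by rewrite mul_bsz0 add0r.
by rewrite addrC addKr.
Qed.

(* A row r with r B c = 0 satisfies r B col(c_{l+k}) = 0 for every k <= j, by
   induction on k from shat = c_{+1} - a c; so r B lies in the left kernel of
   K_{1,j}. *)
Lemma Q2_unit j : (forall i, (i <= 2 * j)%N -> herm_mx (shat i)) ->
  posdef (hankel j.+1 shat) -> posdef (hankel j.+1 kseq) ->
  Q2 a b s j a \in unitmx.
Proof.
move=> ht P1 P2; rewrite Q2E; apply: unitmx_lker => r Hr.
set rho := r *m schur_row shat j.
set de := fun k => rho *m colblk j.+1 (fun l => kseq (l + k)).
have de0 : de 0%N = 0.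
  rewrite /de -[RHS]Hr /rho -mulmxA; congr (_ *m (_ *m _)).
  by apply: eq_colblk => l _; rewrite addn0.
have deS k : (k < j)%N -> de k.+1 = a *: de k.
  move=> kj; apply/eqP; rewrite -subr_eq0 /de scalemxAr -mulmxBr.
  rewrite colblkZ colblkN colblkD -(eq_colblk (f := fun l => shat (l + k))).
    by rewrite /rho -mulmxA schur_row_mul_hankel_col // mulmx0.
  by move=> l _; rewrite shat_kseq addnS.
have de_eq0 k : (k <= j)%N -> de k = 0.
  by elim: k => [|k IH] kj; rewrite ?de0 // deS // IH ?scaler0 // ltnW.
have : rho *m hankel j.+1 kseq = 0.
  rewrite -(rowblk_nthK rho) /hankel rowblk_mul_bmx -[RHS](rowblk0 C q j.+1 1).
  apply: eq_mxrow => k; rewrite -[RHS](de_eq0 k (ltn_ord k)).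
  by rewrite /de -[in RHS](rowblk_nthK rho) rowblk_mul_colblk.
move/(posdef_lker P2) => rho0.
have : rho *m @delta_colblk C q j.+1 j = r by rewrite /rho -mulmxA brow_I_mul_delta mulmx1.
by rewrite rho0 mul0mx => <-.
Qed.

(* For r B p = 0, summation by parts against the blocks rho_l of r B turns
   the orthogonality of r B to the first j columns of K_{1,j} into
   col(sg 1, ..., sg j)^* H_{2,j-1} = 0 for the tail sums sg of rho; since also
   sg 0 = (r B) p = 0, all rho_l vanish. *)
Lemma Gamma1_unit j : (forall i, (i <= 2 * j)%N -> herm_mx (kseq i)) ->
  posdef (hankel j.+1 kseq) -> posdef (hankel j shat) ->
  Gamma1 b s j a \in unitmx.
Proof.
move=> ht P1 P2; rewrite Gamma1E; apply: unitmx_lker => r Hr.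
set rho := r *m schur_row kseq j.
set rl := fun l => ctrmx (colblk_nth (ctrmx rho) l).
have Er : rowblk j.+1 rl = rho := rowblk_nthK rho.
set sg := tail_sum a j rl.
have sg0 : sg 0%N = 0.
  rewrite /sg /tail_sum big_mkord -[RHS]Hr mulmxA -/rho -Er rowblk_mul_colblk.
  by apply: eq_bigr => l _; rewrite subn0 /apow -scalemxAr mulmx1.
have sg_orth k : (k < j)%N -> \sum_(m < j) sg m.+1 *m shat (m + k) = 0.
  move=> kj; have := schur_row_mul_hankel_col ht P1 kj.
  move/(congr1 (mulmx r)); rewrite mulmx0 mulmxA -/rho -Er rowblk_mul_colblk.
  rewrite (sum_by_parts a j rl (fun l => kseq (l + k))) -/sg sg0 mul0mx add0r.
  by move=> sum0; rewrite -[RHS]sum0; apply: eq_bigr => m _; rewrite shat_kseq addSn.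
have sg_eq0 : rowblk j (fun m => sg m.+1) = 0.
  apply: (posdef_lker P2).
  rewrite /hankel rowblk_mul_bmx -[RHS](rowblk0 C q j 1); apply: eq_mxrow => k.
  exact: sg_orth k (ltn_ord k).
have sgj : sg j = 0.
  case E: j sg_eq0 => [|i] sg_eq0; first exact: sg0.
  exact: rowblk_inj (etrans sg_eq0 (esym (rowblk0 C q i.+1 1))) i (ltnSn i).
have rlj : rl j = 0.
  by have := tail_sumS a rl (ltnSn j); rewrite tail_sum_end -/sg sgj scaler0 addr0.
have : rho *m @delta_colblk C q j.+1 j = r by rewrite /rho -mulmxA brow_I_mul_delta mulmx1.
by rewrite -Er rowblk_mul_delta // rlj => <-.
Qed.

Lemma kseq_herm N : b \is Num.real ->
  (forall i, (i <= N)%N -> herm_mx (s i)) -> forall i, (i < N)%N -> herm_mx (kseq i).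
Proof.
move=> hb hs i hi; rewrite /herm_mx /kseq ctrmxB ctrmxZ (conj_Creal hb).
by rewrite hs ?hs // ltnW.
Qed.

Lemma shat_herm N : a \is Num.real -> b \is Num.real ->
  (forall i, (i <= N)%N -> herm_mx (s i)) -> forall i, (i.+1 < N)%N -> herm_mx (shat i).
Proof.
move=> ha hb hs i hi; rewrite /herm_mx /Defs.shat ctrmxB ctrmxD !ctrmxZ.
rewrite rmorphN rmorphM rmorphD /= (conj_Creal ha) (conj_Creal hb).
by rewrite !hs // ltnW // ltnW.
Qed.

End DSMParameters.

Unset Implicit Arguments.

Theorem mainTheorem4 (C : numClosedFieldType) (q n : nat) (a b : C)
    (s : nat -> 'M[C]_q) :
  (0 < q)%N -> (0 < n)%N ->
  a \is Num.real -> b \is Num.real -> a < b ->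
  (forall j, (j <= 2 * n + 1)%N -> herm_mx (s j)) ->
  posdef (H1 s n) -> posdef (H2 a b s n.-1) ->
  posdef (K1 b s n) -> posdef (K2 a s n) ->
  (forall j, (j < n)%N ->
     lbold a b s j = ctrmx (Q2 a b s j a) *m invmx (H2hat a b s j) *m Q2 a b s j a
     /\ posdef (lbold a b s j)) /\
  (forall j, (j <= n)%N ->
     mbold a b s j = ctrmx (Gamma1 b s j a) *m invmx (K1hat b s j) *m Gamma1 b s j a
     /\ posdef (mbold a b s j)).
Proof.
move=> _ n_gt0 a_real b_real _ s_herm _ PH2 PK1 _.
have k_herm i : (i <= 2 * n)%N -> herm_mx (kseq b s i).
  by move=> hi; apply: (kseq_herm b_real s_herm); lia.
have sh_herm i : (i < 2 * n)%N -> herm_mx (shat a b s i).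
  by move=> hi; apply: (shat_herm a_real b_real s_herm); lia.
have Psh : forall j, (j <= n)%N -> posdef (hankel j (shat a b s)).
  apply: hankel_posdef_le => [i hi|]; first by apply: sh_herm; lia.
  by move: PH2; rewrite /H2 prednK.
have Pk : forall j, (j <= n.+1)%N -> posdef (hankel j (kseq b s)).
  by apply: hankel_posdef_le => // i hi; apply: k_herm; lia.
split=> j jn.
  have ht i : (i <= 2 * j)%N -> herm_mx (shat a b s i) by move=> hi; apply: sh_herm; lia.
  have Pj := Psh j.+1 jn.
  rewrite (lboldE ht Pj); split => //; apply: posdef_congr.
    by rewrite H2hatE; apply/posdef_inv/schur_compl_posdef.
  exact: Q2_unit ht Pj (Pk j.+1 (ltnW jn)).
have ht i : (i <= 2 * j)%N -> herm_mx (kseq b s i) by move=> hi; apply: k_herm; lia.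
have Pj := Pk j.+1 jn.
rewrite (mboldE a ht Pj); split => //; apply: posdef_congr.
  by rewrite K1hatE; apply/posdef_inv/schur_compl_posdef.
by apply: Gamma1_unit => //; apply: Psh.
Qed.
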